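(* Without relabeling (model $\alpha$; this holds even if nodes know their neighbours and ports may be reassigned), for every $n$ there exist labeled graphs on $n$ nodes — at least $(1-2^{-\lfloor n/3\rfloor})\lfloor n/3\rfloor!$ of them when $n$ is a multiple of $3$ — such that every routing scheme with stretch factor $<2$ on such a graph has, at each of $n/3$ nodes, a local routing function requiring at least $(n/3)\log n-O(n)$ bits; hence the complete scheme requires at least $(n^2/9)\log n-O(n^2)$ bits. Specifically, for $n=3k$ the graphs are $G_k$ on nodes $v_1,\dots,v_{3k}$, where for each $k+1\le i\le 2k$ node $v_i$ is adjacent to $v_{i+k}$ and to each of $v_1,\dots,v_k$ (and there are no other edges), the nodes $v_1,\dots,v_{2k}$ carry a fixed labeling by $\{1,\dots,2k\}$, and the nodes $v_{2k+1},\dots,v_{3k}$ are labeled by a permutation $\pi$ of $\{2k+1,\dots,3k\}$ with Kolmogorov complexity $C(\pi)\ge k\log k-O(k)$; the bound holds at the nodes $v_1,\dots,v_k$. For $n=3k-1$ or $3k-2$ one uses $G_k$ with $v_k$ (and $v_{k-1}$) removed.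
   Context: $C(x)$ is Kolmogorov complexity w.r.t. a fixed universal Turing machine; $\log$ is base 2. A routing scheme consists of a local routing function at each node $u$ returning, for each destination label $v\ne u$, an edge at $u$; its stretch factor is the maximum over pairs of the ratio of route length to distance. Model $\alpha$: node labels are fixed and cannot be changed. *)

From mathcomp Require Import all_boot all_fingroup.
From Stdlib Require Import Reals.
Set Implicit Arguments. Unset Strict Implicit. Unset Printing Implicit Defensive.

Inductive prf : Type :=
| PZero : prf
| PSucc : prf
| PProj : nat -> prf
| PComp : prf -> list prf -> prf
| PPrec : prf -> prf -> prf
| PMu : prf -> prf.

Inductive eval : prf -> seq nat -> nat -> Prop :=
| eZero v : eval PZero v 0
| eSucc x v : eval PSucc (x :: v) x.+1
| eProj i v : i < size v -> eval (PProj i) v (nth 0 v i)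
| eComp f gs v ys y : evals gs v ys -> eval f ys y -> eval (PComp f gs) v y
| ePrec0 f g v y : eval f v y -> eval (PPrec f g) (0 :: v) y
| ePrecS f g n v r y : eval (PPrec f g) (n :: v) r -> eval g (n :: r :: v) y ->
    eval (PPrec f g) (n.+1 :: v) y
| eMu f v n : eval f (n :: v) 0 ->
    (forall m, m < n -> exists k, 0 < k /\ eval f (m :: v) k) ->
    eval (PMu f) v n
with evals : list prf -> seq nat -> seq nat -> Prop :=
| evNil v : evals nil v [::]
| evCons g gs v y ys : eval g v y -> evals gs v ys -> evals (cons g gs) v (y :: ys).

(* bijection {0,1}^* <-> nat (length-lexicographic order) *)
Definition nat_of_bits (s : seq bool) : nat :=
  (foldl (fun a (b : bool) => a.*2 + b) 1 s).-1.

(* standard (Cantor) coding of finite sequences of naturals *)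
Definition npair (x y : nat) : nat := (x + y) * (x + y).+1 %/ 2 + y.
Definition code_seq (s : seq nat) : nat := foldr (fun x acc => (npair x acc).+1) 0 s.

Definition describes (d : prf) (s : seq bool) (x : nat) : Prop :=
  eval d [:: nat_of_bits s] x.

(* d is additively optimal (universal): C_d <= C_f + O(1) for every partial
   computable f *)
Definition optimal (d : prf) : Prop :=
  forall f : prf, exists c : nat, forall (s : seq bool) (x : nat),
    describes f s x -> exists s', describes d s' x /\ size s' <= size s + c.

Definition KC_ge (d : prf) (x : nat) (b : R) : Prop :=
  forall s, describes d s x -> (b <= INR (size s))%R.

Definition log2 (x : R) : R := (ln x / ln 2)%R.

(* A labeled graph on n nodes: node set 'I_n, node i carries label i+1. *)
Definition simple_graph n (e : rel 'I_n) : Prop :=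
  (forall x y, e x y = e y x) /\ (forall x, ~~ e x x).

Fixpoint reach_in n (e : rel 'I_n) (p : nat) (u v : 'I_n) : bool :=
  match p with
  | 0 => u == v
  | p'.+1 => [exists w, e u w && reach_in e p' w v]
  end.

Definition connected n (e : rel 'I_n) : Prop :=
  forall u v, exists p, reach_in e p u v.

Definition dist_is n (e : rel 'I_n) (u v : 'I_n) (p : nat) : Prop :=
  reach_in e p u v /\ forall q, q < p -> ~~ reach_in e q u v.

(* A routing scheme: F u v = the neighbour of u to which u forwards a message
   with destination (label of) v; the local routing function at u is F u
   restricted to destinations v <> u. *)
Definition routing_scheme n (e : rel 'I_n) (F : 'I_n -> 'I_n -> 'I_n) : Prop :=
  forall u v, u != v -> e u (F u v).

Definition route_len n (F : 'I_n -> 'I_n -> 'I_n) (u v : 'I_n) (m : nat) : Prop :=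
  iter m (fun x => F x v) u = v /\ forall j, j < m -> iter j (fun x => F x v) u != v.

(* stretch factor < 2: for every pair u <> v, (route length)/(distance) < 2
   (over finitely many pairs, max < 2 iff each ratio < 2) *)
Definition stretch_lt2 n (e : rel 'I_n) (F : 'I_n -> 'I_n -> 'I_n) : Prop :=
  forall u v, u != v -> exists m p, route_len F u v m /\ dist_is e u v p /\
    (INR m / INR p < 2)%R.

Definition enc_local n (F : 'I_n -> 'I_n -> 'I_n) (u : 'I_n) : nat :=
  code_seq [seq (if v == u then 0 else (F u v).+1) | v <- enum 'I_n].

(* Node v_i is index i-1.  For j < k the middle node v_(k+1+j) (index k+j) is
   adjacent to v_1..v_k (indices < k) and to v_(2k+1+j); in label terms the
   latter node carries label 2k+1+sigma(j), i.e. pi(2k+1+j) = 2k+1+sigma(j). *)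
Definition Gk_edge0 k (sigma : 'S_k) (x y : 'I_(3 * k)) : bool :=
  ((x < k) && (k <= y) && (y < 2 * k)) ||
  [exists j : 'I_k, (val x == k + j) && (val y == 2 * k + sigma j)].

Definition Gk k (sigma : 'S_k) : rel 'I_(3 * k) :=
  fun x y => Gk_edge0 sigma x y || Gk_edge0 sigma y x.

(* encoding of the permutation pi: labels of v_(2k+1), ..., v_(3k) *)
Definition enc_perm k (sigma : 'S_k) : nat :=
  code_seq [seq (2 * k + sigma j).+1 | j <- enum 'I_k].

Definition Gk_good (d : prf) (c : R) k (sigma : 'S_k) : Prop :=
  forall F, routing_scheme (Gk sigma) F -> stretch_lt2 (Gk sigma) F ->
    forall u : 'I_(3 * k), val u < k ->
      KC_ge d (enc_local F u)
        (INR (3 * k) / 3 * log2 (INR (3 * k)) - c * INR (3 * k))%R.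

(* At a node [v_i] with [i <= k], the leaf labelled [2k + 1 + sigma(j)] is at distance 2 and is
   reached only through the middle node [v_(k+1+j)]; a route of stretch below 2 has at most three
   hops, and a three-hop route would need a neighbour of [v_i] adjacent to [v_(k+1+j)], which does
   not exist.  So the first hop is forced, and a fixed program recovers [sigma] from the local
   routing function at [v_i]: its complexity is at least [C(sigma) - O(1)].  Counting short
   descriptions gives at least [(1 - 2^-k) k!] permutations with [C(sigma) >= log k! - k - 1], and
   [log k! >= k log k - 2k]. *)

From mathcomp Require Import all_boot all_fingroup zify.
From Stdlib Require Import Reals Lra ClassicalEpsilon FunctionalExtensionality.
From Stdlib Require List.
Set Implicit Arguments. Unset Strict Implicit. Unset Printing Implicit Defensive.

(** * Mu-recursive programs *)

Section Evaluation.

Definition prf_nested_ind (P : prf -> Prop) (HZ : P PZero) (HS : P PSucc)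
  (HP : forall i, P (PProj i))
  (HC : forall f gs, P f -> List.Forall P gs -> P (PComp f gs))
  (HR : forall f g, P f -> P g -> P (PPrec f g))
  (HM : forall f, P f -> P (PMu f)) : forall p, P p :=
  fix F p := match p with
  | PZero => HZ | PSucc => HS | PProj i => HP i
  | PComp f gs => HC f gs (F f) ((fix G l := match l return List.Forall P l with
      | nil => List.Forall_nil _ | cons g l' => List.Forall_cons _ (F g) (G l') end) gs)
  | PPrec f g => HR f g (F f) (F g)
  | PMu f => HM f (F f) end.

Let deterministic p := forall v y y', eval p v y -> eval p v y' -> y = y'.

Let evals_det gs : List.Forall deterministic gs ->
  forall v ys ys', evals gs v ys -> evals gs v ys' -> ys = ys'.
Proof.
elim=> [|g gs' Hg _ IH] v ys ys' H1 H2; inversion H1; inversion H2; subst => //.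
by rewrite (Hg _ _ _ H3 H9) (IH _ _ _ H6 H12).
Qed.

Lemma eval_det p v y y' : eval p v y -> eval p v y' -> y = y'.
Proof.
move: p v y y'; apply: prf_nested_ind.
- by move=> v y y' H1 H2; inversion H1; inversion H2; subst.
- by move=> v y y' H1 H2; inversion H1; inversion H2; subst; congruence.
- by move=> i v y y' H1 H2; inversion H1; inversion H2; subst; congruence.
- move=> f gs Hf Hgs v y y' H1 H2; inversion H1; inversion H2; subst.
  have E := evals_det Hgs H3 H9; subst; exact: Hf H6 H12.
- move=> f g Hf Hg [|n v] y y'; first by move=> H1; inversion H1.
  elim: n y y' => [|n IH] y y' H1 H2; inversion H1; inversion H2; subst => //.
    exact: Hf H5 H10.
  have E := IH _ _ H6 H13; subst; exact: Hg H7 H14.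
- move=> f Hf v y y' H1 H2; inversion H1; inversion H2; subst.
  case: (ltngtP y y') => // Hlt.
  + by case: (H8 _ Hlt) => k [Hk Ek]; have := Hf _ _ _ Ek H0; lia.
  + by case: (H3 _ Hlt) => k [Hk Ek]; have := Hf _ _ _ Ek H7; lia.
Qed.

End Evaluation.

Definition computes n p (f : seq nat -> nat) := forall v, size v = n -> eval p v (f v).

Section Combinators.
Variable n : nat.

Lemma computes_ext p f g : computes n p f -> (forall v, size v = n -> f v = g v) ->
  computes n p g.
Proof. by move=> H E v Hv; rewrite -E //; apply: H. Qed.

Lemma computes_proj i : i < n -> computes n (PProj i) (fun v => nth 0 v i).
Proof. by move=> Hi v Hv; apply: eProj; rewrite Hv. Qed.

Lemma computes_zero : computes n PZero (fun _ => 0).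
Proof. by move=> v _; apply: eZero. Qed.

Lemma computes_succ g G : computes n g G ->
  computes n (PComp PSucc [:: g]) (fun v => (G v).+1).
Proof. by move=> Hg v Hv; apply: eComp (eSucc _ _); apply: evCons (Hg _ Hv) (evNil _). Qed.

Lemma computes_comp1 f F g G : computes 1 f F -> computes n g G ->
  computes n (PComp f [:: g]) (fun v => F [:: G v]).
Proof. by move=> Hf Hg v Hv; apply: eComp (Hf _ _) => //; apply: evCons (Hg _ Hv) (evNil _). Qed.

Lemma computes_comp2 f F g1 G1 g2 G2 :
  computes 2 f F -> computes n g1 G1 -> computes n g2 G2 ->
  computes n (PComp f [:: g1; g2]) (fun v => F [:: G1 v; G2 v]).
Proof.
move=> Hf Hg1 Hg2 v Hv; apply: eComp (Hf _ _) => //.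
by apply: evCons (Hg1 _ Hv) (evCons (Hg2 _ Hv) (evNil _)).
Qed.

Lemma computes_comp3 f F g1 G1 g2 G2 g3 G3 :
  computes 3 f F -> computes n g1 G1 -> computes n g2 G2 -> computes n g3 G3 ->
  computes n (PComp f [:: g1; g2; g3]) (fun v => F [:: G1 v; G2 v; G3 v]).
Proof.
move=> Hf Hg1 Hg2 Hg3 v Hv; apply: eComp (Hf _ _) => //.
by apply: evCons (Hg1 _ Hv) (evCons (Hg2 _ Hv) (evCons (Hg3 _ Hv) (evNil _))).
Qed.

Fixpoint prec_fun (Fb Gs : seq nat -> nat) (x : nat) (w : seq nat) : nat :=
  if x is x'.+1 then Gs [:: x', prec_fun Fb Gs x' w & w] else Fb w.

Lemma computes_prec f Fb g Gs : computes n f Fb -> computes n.+2 g Gs ->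
  computes n.+1 (PPrec f g) (fun v => prec_fun Fb Gs (head 0 v) (behead v)).
Proof.
move=> Hf Hg [|x w] //= [Hw].
elim: x => [|x IH] /=; first by apply: ePrec0; apply: Hf.
by apply: ePrecS IH (Hg _ _); rewrite /= Hw.
Qed.

Lemma computes_mu f H B : computes n.+1 f H ->
  (forall v, size v = n -> H (B v :: v) = 0) ->
  computes n (PMu f) (fun v => find (fun i => H (i :: v) == 0) (iota 0 (B v))).
Proof.
move=> Hf HB v Hv; set x := find _ _.
have Hx : x <= B v by rewrite /x -[X in _ <= X](size_iota 0) find_size.
apply: eMu.
  have: H (x :: v) == 0.
    case: (ltnP x (size (iota 0 (B v)))) => Hlt.
      have := nth_find 0 (etrans (has_find _ _) Hlt).
      by rewrite nth_iota ?add0n //; rewrite size_iota in Hlt.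
    have -> : x = B v by apply/eqP; rewrite eqn_leq Hx; rewrite size_iota in Hlt.
    by rewrite HB.
  by move/eqP=> <-; apply: Hf; rewrite /= Hv.
move=> m Hm; exists (H (m :: v)); split; last by apply: Hf; rewrite /= Hv.
have := before_find 0 Hm; rewrite nth_iota ?add0n ?lt0n => [->//|].
exact: leq_trans Hm Hx.
Qed.

End Combinators.

Create HintDb computes discriminated.

Ltac computes_build := repeat first
  [ solve [eauto with computes] | apply: computes_proj; done | apply: computes_zero
  | apply: computes_succ | apply: computes_comp1 | apply: computes_comp2
  | apply: computes_comp3 | apply: computes_prec ].

Ltac computes_by_ext := apply: computes_ext; first by computes_build.

(** * Arithmetic and sequence codes *)

Definition prf_add := PPrec (PProj 0) (PComp PSucc [:: PProj 1]).
Lemma computes_add : computes 2 prf_add (fun v => nth 0 v 0 + nth 0 v 1).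
Proof.
computes_by_ext.
by move=> [|x [|y []]] //= _; elim: x => //= x ->.
Qed.
#[local] Hint Resolve computes_add : computes.

Definition prf_mul := PPrec PZero (PComp prf_add [:: PProj 1; PProj 2]).
Lemma computes_mul : computes 2 prf_mul (fun v => nth 0 v 0 * nth 0 v 1).
Proof.
computes_by_ext.
by move=> [|x [|y []]] //= _; elim: x => //= x ->; rewrite mulSn addnC.
Qed.
#[local] Hint Resolve computes_mul : computes.

Definition prf_pred := PPrec PZero (PProj 0).
Lemma computes_pred : computes 1 prf_pred (fun v => (nth 0 v 0).-1).
Proof. by computes_by_ext; move=> [|[|x] []]. Qed.
#[local] Hint Resolve computes_pred : computes.

Definition prf_sub :=
  PComp (PPrec (PProj 0) (PComp prf_pred [:: PProj 1])) [:: PProj 1; PProj 0].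
Lemma computes_sub : computes 2 prf_sub (fun v => nth 0 v 0 - nth 0 v 1).
Proof.
computes_by_ext.
by move=> [|x [|y []]] //= _; elim: y => //= [|y ->]; rewrite ?subn0 ?subnS.
Qed.
#[local] Hint Resolve computes_sub : computes.

Definition absdiff a b := (a - b) + (b - a).
Definition prf_absdiff :=
  PComp prf_add [:: PComp prf_sub [:: PProj 0; PProj 1]; PComp prf_sub [:: PProj 1; PProj 0]].
Lemma computes_absdiff : computes 2 prf_absdiff (fun v => absdiff (nth 0 v 0) (nth 0 v 1)).
Proof. by computes_by_ext; move=> [|x [|y []]]. Qed.
#[local] Hint Resolve computes_absdiff : computes.

Fixpoint tri s := if s is s'.+1 then tri s' + s'.+1 else 0.
Definition prf_tri := PPrec PZero (PComp prf_add [:: PProj 1; PComp PSucc [:: PProj 0]]).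
Lemma computes_tri : computes 1 prf_tri (fun v => tri (nth 0 v 0)).
Proof. by computes_by_ext; move=> [|x []] //= _; elim: x => //= x ->. Qed.
#[local] Hint Resolve computes_tri : computes.

Lemma npairE x y : npair x y = tri (x + y) + y.
Proof.
suff -> : forall s, tri s = s * s.+1 %/ 2 by [].
elim=> //= s ->.
have -> : s.+1 * s.+2 = s * s.+1 + s.+1 * 2 by lia.
by rewrite divnDr ?dvdn_mull // mulnK.
Qed.

Definition prf_npair :=
  PComp prf_add [:: PComp prf_tri [:: PComp prf_add [:: PProj 0; PProj 1]]; PProj 1].
Lemma computes_npair : computes 2 prf_npair (fun v => npair (nth 0 v 0) (nth 0 v 1)).
Proof. by computes_by_ext; move=> [|x [|y []]] //= _; rewrite npairE. Qed.
#[local] Hint Resolve computes_npair : computes.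

Lemma tri_ge s : s <= tri s.
Proof. by elim: s => //= s IH; lia. Qed.

Lemma leq_tri : {homo tri : a b / a <= b}.
Proof. by apply: homo_leq => [//|b a c|s]; [apply: leq_trans | rewrite /= leq_addr]. Qed.

Lemma find_iota_least (a : pred nat) m B : m <= B -> a m -> (forall i, i < m -> ~~ a i) ->
  find a (iota 0 B) = m.
Proof.
move=> HmB Ham Hlt; rewrite -(subnKC HmB) iotaD find_cat size_iota add0n.
have -> : has a (iota 0 m) = false.
  by apply/negbTE/hasPn => i; rewrite mem_iota add0n => /andP [_ /Hlt].
by case: (B - m) => [|b] /=; rewrite ?Ham addn0.
Qed.

(* [pair_sum w] is the diagonal [x + y] of the Cantor pairing [w = npair x y]. *)
Definition pair_sum w := find (fun s => w.+1 - tri s.+1 == 0) (iota 0 w).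
Definition unpair2 w := w - tri (pair_sum w).
Definition unpair1 w := pair_sum w - unpair2 w.

Definition prf_pair_sum :=
  PMu (PComp prf_sub [:: PComp PSucc [:: PProj 1]; PComp prf_tri [:: PComp PSucc [:: PProj 0]]]).
Lemma computes_pair_sum : computes 1 prf_pair_sum (fun v => pair_sum (nth 0 v 0)).
Proof.
apply: computes_ext.
  apply: (@computes_mu 1 _ (fun v => (nth 0 v 1).+1 - tri (nth 0 v 0).+1) (nth 0 ^~ 0)).
    by computes_by_ext; move=> [|x [|y []]].
  by move=> [|w []] //= _; have := tri_ge w.+1; lia.
by move=> [|w []].
Qed.
#[local] Hint Resolve computes_pair_sum : computes.

Definition prf_unpair2 :=
  PComp prf_sub [:: PProj 0; PComp prf_tri [:: PComp prf_pair_sum [:: PProj 0]]].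
Lemma computes_unpair2 : computes 1 prf_unpair2 (fun v => unpair2 (nth 0 v 0)).
Proof. by computes_by_ext; move=> [|w []]. Qed.
#[local] Hint Resolve computes_unpair2 : computes.

Definition prf_unpair1 :=
  PComp prf_sub [:: PComp prf_pair_sum [:: PProj 0]; PComp prf_unpair2 [:: PProj 0]].
Lemma computes_unpair1 : computes 1 prf_unpair1 (fun v => unpair1 (nth 0 v 0)).
Proof. by computes_by_ext; move=> [|w []]. Qed.
#[local] Hint Resolve computes_unpair1 : computes.

Lemma pair_sum_npair x y : pair_sum (npair x y) = x + y.
Proof.
rewrite /pair_sum npairE; apply: find_iota_least.
- by have := tri_ge (x + y); lia.
- by rewrite /= subn_eq0; lia.
- by move=> i Hi; rewrite subn_eq0 -ltnNge ltnS; have := leq_tri Hi; lia.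
Qed.

Lemma unpair2_npair x y : unpair2 (npair x y) = y.
Proof. by rewrite /unpair2 pair_sum_npair npairE; lia. Qed.

Lemma unpair1_npair x y : unpair1 (npair x y) = x.
Proof. by rewrite /unpair1 pair_sum_npair unpair2_npair; lia. Qed.

Lemma code_seq_inj : injective code_seq.
Proof.
elim=> [|x s IH] [|x' s'] //= [E].
have := congr1 unpair1 E; have := congr1 unpair2 E.
by rewrite !unpair1_npair !unpair2_npair => /IH -> ->.
Qed.

Definition code_tail z := unpair2 z.-1.
Definition code_head z := unpair1 z.-1.
Definition code_nth z i := code_head (iter i code_tail z).
Definition code_size z := find (fun i => iter i code_tail z == 0) (iota 0 z).

Definition prf_code_tail := PComp prf_unpair2 [:: PComp prf_pred [:: PProj 0]].
Lemma computes_code_tail : computes 1 prf_code_tail (fun v => code_tail (nth 0 v 0)).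
Proof. by computes_by_ext; move=> [|w []]. Qed.
#[local] Hint Resolve computes_code_tail : computes.

Definition prf_code_head := PComp prf_unpair1 [:: PComp prf_pred [:: PProj 0]].
Lemma computes_code_head : computes 1 prf_code_head (fun v => code_head (nth 0 v 0)).
Proof. by computes_by_ext; move=> [|w []]. Qed.
#[local] Hint Resolve computes_code_head : computes.

Definition prf_iter_tail := PPrec (PProj 0) (PComp prf_code_tail [:: PProj 1]).
Lemma computes_iter_tail :
  computes 2 prf_iter_tail (fun v => iter (nth 0 v 0) code_tail (nth 0 v 1)).
Proof. by computes_by_ext; move=> [|i [|z []]] //= _; elim: i => //= i ->. Qed.
#[local] Hint Resolve computes_iter_tail : computes.

Definition prf_code_nth :=
  PComp prf_code_head [:: PComp prf_iter_tail [:: PProj 1; PProj 0]].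
Lemma computes_code_nth : computes 2 prf_code_nth (fun v => code_nth (nth 0 v 0) (nth 0 v 1)).
Proof. by computes_by_ext; move=> [|i [|z []]]. Qed.
#[local] Hint Resolve computes_code_nth : computes.

Lemma iter_code_tail_le i z : iter i code_tail z <= z - i.
Proof.
elim: i => [|i IH] /=; first by rewrite subn0.
rewrite /= {1}/code_tail /unpair2.
set t := iter i code_tail z in IH *.
by have := leq_subr (tri (pair_sum t.-1)) t.-1; lia.
Qed.

Definition prf_code_size := PMu prf_iter_tail.
Lemma computes_code_size : computes 1 prf_code_size (fun v => code_size (nth 0 v 0)).
Proof.
apply: computes_ext.
  apply: (@computes_mu 1 _ (fun v => iter (nth 0 v 0) code_tail (nth 0 v 1)) (nth 0 ^~ 0)).
    exact: computes_iter_tail.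
  by move=> [|z []] //= _; have := iter_code_tail_le z z; rewrite subnn; lia.
by move=> [|w []].
Qed.
#[local] Hint Resolve computes_code_size : computes.

Lemma iter_code_tail s i : iter i code_tail (code_seq s) = code_seq (drop i s).
Proof.
elim: i s => [|i IH] s; first by rewrite drop0.
rewrite iterS IH -add1n -drop_drop; case: (drop i s) => //= x t.
by rewrite /code_tail unpair2_npair drop0.
Qed.

Lemma code_nthE s i : code_nth (code_seq s) i = nth 0 s i.
Proof.
rewrite /code_nth iter_code_tail.
case: (ltnP i (size s)) => Hi; first by rewrite (drop_nth 0 Hi) /code_head /= unpair1_npair.
by rewrite drop_oversize // nth_default.
Qed.

Lemma code_sizeE s : code_size (code_seq s) = size s.
Proof.
rewrite /code_size; apply: find_iota_least.
- by elim: s => //= x s IH; rewrite npairE; lia.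
- by rewrite iter_code_tail drop_size.
- by move=> i Hi; rewrite iter_code_tail (drop_nth 0 Hi).
Qed.

Definition div3 n := find (fun k => n.+1 - (k.+1 + (k.+1 + k.+1)) == 0) (iota 0 n).
Definition prf_div3 := PMu (PComp prf_sub [:: PComp PSucc [:: PProj 1];
  PComp prf_add [:: PComp PSucc [:: PProj 0];
    PComp prf_add [:: PComp PSucc [:: PProj 0]; PComp PSucc [:: PProj 0]]]]).
Lemma computes_div3 : computes 1 prf_div3 (fun v => div3 (nth 0 v 0)).
Proof.
apply: computes_ext.
  apply: (@computes_mu 1 _ (fun v => (nth 0 v 1).+1 - ((nth 0 v 0).+1 +
      ((nth 0 v 0).+1 + (nth 0 v 0).+1))) (nth 0 ^~ 0)).
    by computes_by_ext; move=> [|x [|y []]].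
  by move=> [|w []] //= _; lia.
by move=> [|w []].
Qed.
#[local] Hint Resolve computes_div3 : computes.

Lemma div3E n : div3 n = n %/ 3.
Proof.
by rewrite /div3; apply: find_iota_least => [||i Hi]; rewrite ?subn_eq0; lia.
Qed.

(** * Decoding a routing table *)

(* [sg j] is the position [i] of the value [(k + j).+1] among the table entries [2k + i]; the
   factor [k - i] makes [i = k] a zero, which bounds the search. *)
Definition decode_index k z j :=
  find (fun i => absdiff (code_nth z (k + k + i)) (k + j).+1 * (k - i) == 0) (iota 0 k).

Fixpoint decode_suffix r k z :=
  if r is r'.+1 then (npair (k + k + decode_index k z (k - r)).+1 (decode_suffix r' k z)).+1
  else 0.

Definition decode_table z := decode_suffix (div3 (code_size z)) (div3 (code_size z)) z.

Definition prf_decode_index := PMu (PComp prf_mul [::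
  PComp prf_absdiff [:: PComp prf_code_nth [:: PProj 4;
       PComp prf_add [:: PComp prf_add [:: PProj 3; PProj 3]; PProj 0]];
    PComp PSucc [:: PComp prf_add [:: PProj 3;
      PComp prf_sub [:: PProj 3; PComp PSucc [:: PProj 1]]]]];
  PComp prf_sub [:: PProj 3; PProj 0]]).
Lemma computes_decode_index : computes 4 prf_decode_index
  (fun v => decode_index (nth 0 v 2) (nth 0 v 3) (nth 0 v 2 - (nth 0 v 0).+1)).
Proof.
apply: computes_ext.
  apply: (@computes_mu 4 _ (fun v => absdiff (code_nth (nth 0 v 4)
        (nth 0 v 3 + nth 0 v 3 + nth 0 v 0)) (nth 0 v 3 + (nth 0 v 3 - (nth 0 v 1).+1)).+1
      * (nth 0 v 3 - nth 0 v 0)) (nth 0 ^~ 2)).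
    by computes_by_ext; move=> [|i [|r [|a [|k [|z []]]]]].
  by move=> [|r [|a [|k [|z []]]]] //= _; rewrite subnn muln0.
by move=> [|r [|a [|k [|z []]]]].
Qed.
#[local] Hint Resolve computes_decode_index : computes.

Definition prf_decode_suffix := PPrec PZero (PComp PSucc [:: PComp prf_npair [::
  PComp PSucc [:: PComp prf_add [:: PComp prf_add [:: PProj 2; PProj 2]; prf_decode_index]];
  PProj 1]]).
Lemma computes_decode_suffix : computes 3 prf_decode_suffix
  (fun v => decode_suffix (nth 0 v 0) (nth 0 v 1) (nth 0 v 2)).
Proof.
by computes_by_ext; move=> [|r [|k [|z []]]] //= _; elim: r => //= r ->.
Qed.
#[local] Hint Resolve computes_decode_suffix : computes.

Definition prf_decode_table := PComp prf_decode_suffix [::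
  PComp prf_div3 [:: PComp prf_code_size [:: PProj 0]];
  PComp prf_div3 [:: PComp prf_code_size [:: PProj 0]]; PProj 0].
Lemma computes_decode_table :
  computes 1 prf_decode_table (fun v => decode_table (nth 0 v 0)).
Proof. by computes_by_ext; move=> [|z []]. Qed.

Section DecodeTable.
Variables (k : nat) (sg : 'S_k) (t : seq nat).
Hypothesis Ht : forall J : 'I_k, nth 0 t (2 * k + sg J) = (k + J).+1.
Local Notation labels := [seq (2 * k + sg j).+1 | j <- enum 'I_k].

Lemma decode_indexE (J : 'I_k) : decode_index k (code_seq t) J = sg J.
Proof.
rewrite /decode_index; apply: find_iota_least => [||i Hi].
- exact: ltnW.
- by rewrite code_nthE addnn -mul2n Ht /absdiff !subnn.
- have Hik : i < k by apply: ltn_trans Hi (ltn_ord _).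
  pose J' := (sg^-1)%g (Ordinal Hik).
  have EJ' : nat_of_ord (sg J') = i by rewrite permKV.
  have HJ' : val J' != val J by apply: contraTneq Hi => /val_inj <-; rewrite EJ' ltnn.
  rewrite code_nthE addnn -mul2n -EJ' Ht muln_eq0 negb_or /absdiff.
  by have := ltn_ord (sg J'); move: HJ' => /=; lia.
Qed.

Lemma decode_suffixE r : r <= k ->
  decode_suffix r k (code_seq t) = code_seq (drop (k - r) labels).
Proof.
elim: r => [|r IH] Hr /=; first by rewrite subn0 drop_oversize // size_map size_enum_ord.
have Hj : k - r.+1 < k by lia.
have Hsz : k - r.+1 < size labels by rewrite size_map size_enum_ord.
rewrite IH ?(ltnW Hr) // (drop_nth 0 Hsz) subnSK // -[k - r.+1]/(nat_of_ord (Ordinal Hj)).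
by rewrite decode_indexE (nth_map (Ordinal Hj)) ?size_enum_ord // nth_ord_enum addnn mul2n.
Qed.

Lemma decode_tableE : size t %/ 3 = k -> decode_table (code_seq t) = enc_perm sg.
Proof.
by move=> Hk; rewrite /decode_table code_sizeE div3E Hk decode_suffixE // subnn drop0.
Qed.

End DecodeTable.

(** * Routing with stretch below 2 *)

Section Reach.
Variables (n : nat) (e : rel 'I_n).

Lemma reach_in1 u v : reach_in e 1 u v = e u v.
Proof. by apply/existsP/idP => [[w /andP [H /eqP <-]] // | H]; exists v; rewrite H /=. Qed.

Lemma reach_in_cat p q u w v : reach_in e p u w -> reach_in e q w v -> reach_in e (p + q) u v.
Proof.
elim: p u => [|p IH] u /=; first by move/eqP ->.
by move=> /existsP [w' /andP [H1 H2]] H3; apply/existsP; exists w'; rewrite H1 (IH _ H2 H3).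
Qed.

Lemma reach_in_sym : (forall x y, e x y = e y x) ->
  forall p u v, reach_in e p u v -> reach_in e p v u.
Proof.
move=> Hs; elim=> [|p IH] u v; first by rewrite /= eq_sym.
move=> /existsP [w /andP [H1 H2]]; rewrite -addn1.
by apply: reach_in_cat (IH _ _ H2) _; rewrite reach_in1 Hs.
Qed.

Lemma dist_is2 u m w p : u != w -> ~~ e u w -> e u m -> e m w -> dist_is e u w p -> p = 2.
Proof.
move=> Huw Huw' Hum Hmw [Hp Hq].
have R2 : reach_in e 2 u w.
  by rewrite -[2]/(1 + 1); apply: (@reach_in_cat _ _ _ m); rewrite reach_in1.
have : p <= 2 by rewrite leqNgt; apply/negP => /Hq; rewrite R2.
case: p Hp {Hq} => [|[|[|]]] //=; first by rewrite (negbTE Huw).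
by move=> H; move: Huw'; rewrite -reach_in1 /= H.
Qed.

(* A route of stretch below 2 to a node at distance 2 has at most 3 hops. *)
Lemma next_hop_forced F u m w : routing_scheme e F -> stretch_lt2 e F ->
  u != w -> e u m -> e m w -> ~~ e u w -> (forall y, e y w -> y = m) ->
  (forall y, e u y -> ~~ e y m) -> F u w = m.
Proof.
move=> HF Hs Huw Hum Hmw Huw' Hw Hu.
have [l [p [[Hit Hnot] [Hp Hr]]]] := Hs _ _ Huw.
rewrite (dist_is2 Huw Huw' Hum Hmw Hp) in Hr.
have Hl : l < 4.
  apply/ltP/INR_lt; move: Hr; rewrite /= -[(1 + 1)%R]/2%R; lra.
have Hu1 : e u (F u w) := HF _ _ Huw.
move: Hit Hnot; set f := fun x => F x w.
clear Hr; case: l Hl => [|[|[|[|l]]]] // _ /= Hit Hnot.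
- by move: Huw; rewrite Hit eqxx.
- by move: Huw'; rewrite -Hit Hu1.
- by have := HF _ _ (Hnot 1 isT); rewrite -[F _ w]/(f (f u)) Hit => /Hw.
- have Em : f (f u) = m.
    by have := HF _ _ (Hnot 2 isT); rewrite -[F _ w]/(f (f (f u))) Hit => /Hw.
  by have := HF _ _ (Hnot 1 isT); rewrite -[F _ w]/(f (f u)) Em (negbTE (Hu _ Hu1)).
Qed.

End Reach.

Section PaddedGraph.
Variables (k : nat) (sg : 'S_k) (n : nat).

(* For [n] not a multiple of 3 we take [k = n %/ 3] and attach the at most two surplus nodes as
   leaves of [v_1], instead of deleting nodes from [G_(k+1)]. *)
Definition Gk_pad_edge0 (x y : 'I_n) :=
  [|| (x < k) && (k <= y) && (y < 2 * k),
      [exists j : 'I_k, (x == k + j :> nat) && (y == 2 * k + sg j :> nat)]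
    | (x == 0 :> nat) && (3 * k <= y) && (y != 0 :> nat)].

Definition Gk_pad : rel 'I_n := fun x y => Gk_pad_edge0 x y || Gk_pad_edge0 y x.

Lemma Gk_pad_edge0P (x y : 'I_n) : reflect
  [\/ x < k /\ k <= y < 2 * k,
      exists j : 'I_k, x = k + j :> nat /\ y = 2 * k + sg j :> nat
    | x = 0 :> nat /\ 3 * k <= y /\ y <> 0 :> nat] (Gk_pad_edge0 x y).
Proof.
apply: (iffP idP).
  case/or3P => [/andP [/andP [a b] c]|/existsP [j /andP [/eqP a /eqP b]]|].
  - by apply: Or31; rewrite b.
  - by apply: Or32; exists j.
  - by move=> /andP [/andP [/eqP a b] /eqP c]; apply: Or33.
case=> [[a /andP [b c]]|[j [Ex Ey]]|[Ex [Ey Ez]]]; apply/or3P.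
- by apply: Or31; rewrite a b c.
- by apply: Or32; apply/existsP; exists j; rewrite Ex Ey !eqxx.
- by apply: Or33; rewrite Ex Ey eqxx; apply/eqP.
Qed.

Lemma Gk_pad_simple : simple_graph Gk_pad.
Proof.
split=> [x y|x]; first by rewrite /Gk_pad orbC.
rewrite /Gk_pad orbb; apply/negP; case/Gk_pad_edge0P => [|[j]|]; try lia.
by have := ltn_ord j; lia.
Qed.

Hypothesis Hk : n %/ 3 = k.

Lemma Gk_pad_connected : connected Gk_pad.
Proof.
move=> u v.
have Hn0 : 0 < n by have := ltn_ord u; lia.
pose z0 := Ordinal Hn0.
have edge x y : Gk_pad_edge0 x y \/ Gk_pad_edge0 y x -> reach_in Gk_pad 1 x y.
  by rewrite reach_in1 /Gk_pad => -[] ->; rewrite ?orbT.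
have Hz (x : 'I_n) : exists p, reach_in Gk_pad p x z0.
  have Hx := ltn_ord x.
  case: (posnP x) => Hx0; first by exists 0; apply/eqP/val_inj.
  case: (ltnP x k) => Hxk.
    have Hm : k < n by lia.
    exists (1 + 1); apply: (@reach_in_cat _ _ _ _ _ (Ordinal Hm)); apply: edge.
      by left; apply/Gk_pad_edge0P/Or31 => /=; lia.
    by right; apply/Gk_pad_edge0P/Or31 => /=; lia.
  case: (ltnP x (2 * k)) => Hx2.
    by exists 1; apply: edge; right; apply/Gk_pad_edge0P/Or31 => /=; lia.
  case: (ltnP x (3 * k)) => Hx3.
    have Hi : x - 2 * k < k by lia.
    pose J := (sg^-1)%g (Ordinal Hi).
    have EJ : sg J = x - 2 * k :> nat by rewrite permKV.
    have Hm : k + J < n by have := ltn_ord J; lia.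
    exists (1 + 1); apply: (@reach_in_cat _ _ _ _ _ (Ordinal Hm)); apply: edge.
      by right; apply/Gk_pad_edge0P/Or32; exists J; rewrite EJ /=; lia.
    by right; apply/Gk_pad_edge0P/Or31; have := ltn_ord J; rewrite /=; lia.
  by exists 1; apply: edge; right; apply/Gk_pad_edge0P/Or33 => /=; lia.
have [p Hp] := Hz u; have [q Hq] := Hz v.
exists (p + q); apply: reach_in_cat Hp (reach_in_sym _ Hq).
by case: Gk_pad_simple.
Qed.

Lemma Gk_pad_next_hop F (u m w : 'I_n) (J : 'I_k) :
  routing_scheme Gk_pad F -> stretch_lt2 Gk_pad F ->
  u < k -> m = k + J :> nat -> w = 2 * k + sg J :> nat -> F u w = m.
Proof.
move=> HF Hs Hu Hm Hw.
have HJ := ltn_ord J; have HsJ := ltn_ord (sg J).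
have Hlt (j : 'I_k) : j < k /\ sg j < k by split; apply: ltn_ord.
apply: next_hop_forced HF Hs _ _ _ _ _ _.
- by apply/eqP => E; move: Hw; rewrite -E; lia.
- by apply/orP; left; apply/Gk_pad_edge0P/Or31; lia.
- by apply/orP; left; apply/Gk_pad_edge0P/Or32; exists J.
- by apply/negP => /orP [] /Gk_pad_edge0P [|[j []]|]; try lia; have := Hlt j; lia.
- move=> y /orP [] /Gk_pad_edge0P [|[j []]|]; try lia; try by have := Hlt j; lia.
  move=> Ey Ej; have /perm_inj Ejj : sg j = sg J by apply: ord_inj; lia.
  by apply: ord_inj; rewrite Ey Hm Ejj.
- move=> y Hy; apply/negP => Hz.
  case/orP: Hy => /Gk_pad_edge0P [|[j []]|]; case/orP: Hz => /Gk_pad_edge0P [|[j' []]|];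
    try lia; try (have := Hlt j; lia); try (have := Hlt j'; lia);
    by have := Hlt j; have := Hlt j'; lia.
Qed.

Lemma Gk_pad_decode F (u : 'I_n) :
  routing_scheme Gk_pad F -> stretch_lt2 Gk_pad F -> u < k ->
  decode_table (enc_local F u) = enc_perm sg.
Proof.
move=> HF Hs Hu; apply: decode_tableE; last by rewrite size_map size_enum_ord.
move=> J; have HJ := ltn_ord J; have HsJ := ltn_ord (sg J).
have Hm : k + J < n by lia.
have Hw : 2 * k + sg J < n by lia.
rewrite (nth_map u) ?size_enum_ord // -[2 * k + sg J]/(nat_of_ord (Ordinal Hw)) nth_ord_enum.
have -> : (Ordinal Hw == u) = false by apply/eqP => /(congr1 val) /=; lia.
by rewrite (@Gk_pad_next_hop F u (Ordinal Hm) _ J).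
Qed.

End PaddedGraph.

Arguments Gk_pad {k} sg n.

Lemma Gk_pad3 k (sg : 'S_k) : Gk_pad sg (3 * k) = Gk sg.
Proof.
apply: functional_extensionality => x; apply: functional_extensionality => y.
have Hx : (3 * k <= x) = false by rewrite leqNgt ltn_ord.
have Hy : (3 * k <= y) = false by rewrite leqNgt ltn_ord.
by rewrite /Gk_pad /Gk_pad_edge0 Hx Hy !andbF !orbF.
Qed.

(** * Logarithms *)

Section Log2.
Local Open Scope R_scope.

Lemma INR_leq (a b : nat) : (a <= b)%nat -> INR a <= INR b.
Proof. by move/leP; apply: le_INR. Qed.

Lemma INR_expn (a b : nat) : INR (expn a b) = INR a ^ b.
Proof. by elim: b => [|b IH]; rewrite ?expn0 // expnS mult_INR IH. Qed.

Lemma ln2_gt0 : 0 < ln 2.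
Proof. by have := ln_lt_2; lra. Qed.

Lemma log2M x y : 0 < x -> 0 < y -> log2 (x * y) = log2 x + log2 y.
Proof. by move=> Hx Hy; rewrite /log2 ln_mult //; field; have := ln2_gt0; lra. Qed.

Lemma log2_pow2 t : log2 (2 ^ t) = INR t.
Proof. by rewrite /log2 ln_pow; [field; have := ln2_gt0|]; lra. Qed.

Lemma log2_lt x y : 0 < x -> x < y -> log2 x < log2 y.
Proof.
move=> Hx Hxy; apply: Rmult_lt_compat_r; last exact: ln_increasing.
exact/Rinv_0_lt_compat/ln2_gt0.
Qed.

Lemma log2_le x y : 0 < x -> x <= y -> log2 x <= log2 y.
Proof. by move=> Hx [H|->]; [apply/Rlt_le/log2_lt | lra]. Qed.

Lemma log2_ge0 x : 1 <= x -> 0 <= log2 x.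
Proof. by move=> H; rewrite -(Rmult_0_l (/ ln 2)) -ln_1; apply: log2_le; lra. Qed.

Lemma log2_lt_pow2 x t : 0 < x -> x < 2 ^ t -> log2 x < INR t.
Proof. by move=> Hx Ht; rewrite -log2_pow2; apply: log2_lt. Qed.

(* Stdlib's [ln] is [0] outside the positive reals. *)
Lemma log2_0 : log2 0 = 0.
Proof.
rewrite /log2 /ln; case: Rlt_dec => [H|_]; first by case: (Rlt_irrefl _ H).
by rewrite /Rdiv Rmult_0_l.
Qed.

Lemma log2_INR_ge0 n : 0 <= log2 (INR n).
Proof.
case: n => [|n]; first by rewrite log2_0; lra.
by apply: log2_ge0; rewrite -[1]/(INR 1); apply: INR_leq.
Qed.

Lemma log2_INR_le n : log2 (INR n) <= INR n.
Proof.
case: n => [|n]; first by rewrite /= log2_0; lra.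
rewrite -[X in _ <= X]log2_pow2; apply: log2_le; first exact/lt_0_INR/ltP.
by rewrite -[2]/(INR 2) -INR_expn; apply/INR_leq/ltnW/ltn_expl.
Qed.

Lemma ln_fact k : INR k * ln (INR k) - INR k <= ln (INR k`!).
Proof.
elim: k => [|k IH]; first by rewrite /= Rmult_0_l ln_1; lra.
rewrite factS mult_INR ln_mult; last first.
- by apply: lt_0_INR; apply/ltP; apply: fact_gt0.
- exact/lt_0_INR/ltP.
suff: INR k * (ln (INR k.+1) - ln (INR k)) <= 1 by rewrite S_INR; nra.
case: k {IH} => [|k]; first by rewrite Rmult_0_l; lra.
have Hk : 0 < INR k.+1 by apply/lt_0_INR/ltP.
have Hinv : 0 < / INR k.+1 by apply: Rinv_0_lt_compat.
have HL : ln (1 + / INR k.+1) < / INR k.+1.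
  rewrite -[X in _ < X]ln_exp; apply: ln_increasing; first lra.
  exact/exp_ineq1/Rgt_not_eq.
have -> : INR k.+2 = INR k.+1 * (1 + / INR k.+1) by rewrite [INR k.+2]S_INR; field; lra.
rewrite ln_mult //; last lra.
have := Rmult_lt_compat_l _ _ _ Hk HL; rewrite Rinv_r; lra.
Qed.

Lemma log2_fact k : INR k * log2 (INR k) - 2 * INR k <= log2 (INR k`!).
Proof.
have H := ln_fact k; have Hl := ln2_gt0; have Hk := pos_INR k.
have Hi : / ln 2 < 2.
  by apply: (Rmult_lt_reg_l (ln 2)) => //; rewrite Rinv_r; have := ln_lt_2; lra.
rewrite /log2 /Rdiv.
have Hinv : 0 < / ln 2 by apply: Rinv_0_lt_compat.
have : (INR k * ln (INR k) - INR k) * / ln 2 <= ln (INR k`!) * / ln 2.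
  by apply: Rmult_le_compat_r; lra.
have : INR k * / ln 2 <= INR k * 2 by apply: Rmult_le_compat_l; lra.
nra.
Qed.

Lemma log2_fact_lt k : log2 (INR k`!) < INR (trunc_log 2 k`!) + 1.
Proof.
rewrite -S_INR; apply: log2_lt_pow2; first exact/lt_0_INR/ltP/fact_gt0.
by rewrite -[2]/(INR 2) -INR_expn; apply/lt_INR/ltP/trunc_log_ltn.
Qed.

End Log2.

(** * Kolmogorov complexity *)

Lemma KC_ge_preimage d g f : optimal d -> computes 1 g (fun v => f (nth 0 v 0)) ->
  exists c : nat, forall x b, KC_ge d (f x) b -> KC_ge d x (b - INR c)%R.
Proof.
move=> Hd Hg; have [c Hc] := Hd (PComp g [:: d]); exists c => x b Hb s Hs.
have [|s' [Hs' Hsize]] := Hc s (f x).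
  by apply: (@eComp _ _ _ [:: x]); [apply: evCons Hs (evNil _) | apply: Hg].
have := Hb _ Hs'; have /leP/le_INR := Hsize; rewrite plus_INR; lra.
Qed.

Lemma nat_of_bits_lt s : nat_of_bits s < expn 2 (size s).+1 - 1.
Proof.
suff H a : 0 < a -> 0 < foldl (fun a (b : bool) => a.*2 + b) a s /\
    (foldl (fun a (b : bool) => a.*2 + b) a s).+1 <= a.+1 * expn 2 (size s).
  by have [H0 H1] := H 1 isT; rewrite /nat_of_bits expnS; lia.
elim: s a => [|b s IH] a Ha /=; first by rewrite expn0 muln1.
have [H0 H1] := IH (a.*2 + b) ltac:(lia); split => //.
by apply: leq_trans H1 _; rewrite expnS mulnA leq_mul2r; case: b {H0} => /=; lia.
Qed.

(* Fewer than [2 ^ B] bit strings are shorter than [B], and each describes at most one [x]. *)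
Lemma incompressible_set (T : finType) (P : T -> nat -> Prop) B :
  (forall x y N, P x N -> P y N -> x = y) ->
  exists A : {set T}, #|T| < #|A| + expn 2 B /\
    forall x, x \in A -> forall s, P x (nat_of_bits s) -> B <= size s.
Proof.
move=> Hinj.
pose bad x := exists N, N < expn 2 B - 1 /\ P x N.
pose A := [set x | if excluded_middle_informative (bad x) then false else true].
exists A; split.
  pose f x := if excluded_middle_informative (bad x) is left H
    then proj1_sig (constructive_indefinite_description _ H) else 0.
  have Hf x : x \notin A -> f x < expn 2 B - 1 /\ P x (f x).
    rewrite /A inE /f; case: excluded_middle_informative => // H _.
    exact: proj2_sig (constructive_indefinite_description _ H).
  suff : #|~: A| <= expn 2 B - 1 by rewrite cardsCs setCK; have := expn_gt0 2 B; lia.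
  rewrite cardE -(size_map f) -(size_iota 0 (expn 2 B - 1)); apply: uniq_leq_size.
    rewrite map_inj_in_uniq ?enum_uniq // => x y; rewrite !mem_enum !in_setC => Hx Hy E.
    have [_ Px] := Hf x Hx; have [_ Py] := Hf y Hy.
    by apply: Hinj Px _; rewrite E.
  move=> z /mapP [x]; rewrite mem_enum in_setC => Hx ->; rewrite mem_iota add0n.
  exact: (proj1 (Hf x Hx)).
move=> x; rewrite inE; case: excluded_middle_informative => // Hb _ s Hs.
rewrite leqNgt; apply/negP => Hlt; apply: Hb; exists (nat_of_bits s); split => //.
apply: leq_trans (nat_of_bits_lt s) _.
by have := leq_pexp2l (isT : 0 < 2) Hlt; have := expn_gt0 2 (size s).+1; lia.
Qed.

Lemma enc_perm_inj k : injective (@enc_perm k).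
Proof.
move=> s1 s2 /code_seq_inj /eq_in_map E; apply/permP => J.
by have := E J; rewrite mem_enum => /(_ isT) [] H; apply: ord_inj; lia.
Qed.

Lemma trunc_log_fact_ge k :
  (INR k * log2 (INR k) - 4 * INR k <= INR (trunc_log 2 k`! - k)%nat)%R.
Proof.
have Hf := log2_fact k; have Ht := log2_fact_lt k; have Hk := pos_INR k.
set t := trunc_log 2 k`! in Ht *; set L := log2 (INR k) in Hf *.
case: (leqP k t) => Hkt.
  rewrite minus_INR; last exact/leP.
  case: (posnP k) => [->|Hk0]; first by rewrite /= Rmult_0_l; have := pos_INR t; lra.
  by have := INR_leq Hk0; rewrite /=; lra.
have -> : t - k = 0 by lia.
have : (INR t + 1 <= INR k)%R by rewrite -S_INR; apply: INR_leq.
by rewrite /=; lra.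
Qed.

Lemma perm_incompressible d k : exists A : {set 'S_k},
  ((1 - (1/2) ^ k) * INR k`! <= INR #|A|)%R /\
  forall sg, sg \in A -> KC_ge d (enc_perm sg) (INR k * log2 (INR k) - 4 * INR k)%R.
Proof.
pose t := trunc_log 2 k`!.
have Hinj (x y : 'S_k) N : eval d [:: N] (enc_perm x) -> eval d [:: N] (enc_perm y) -> x = y.
  by move=> Hx Hy; apply: enc_perm_inj; apply: eval_det Hx Hy.
have [A [HA HAs]] := incompressible_set (t - k) Hinj.
exists A; split; last first.
  by move=> sg Hsg s Hs; apply: Rle_trans (trunc_log_fact_ge k) (INR_leq (HAs _ Hsg _ Hs)).
rewrite card_Sn in HA.
have Hq : (INR (expn 2 (t - k)) - 1 <= (1/2) ^ k * INR k`!)%R.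
  have Hh : (0 <= (1/2) ^ k)%R by apply: pow_le; lra.
  case: (leqP k t) => Hkt; last first.
    have -> : t - k = 0 by lia.
    by have := Rmult_le_pos _ _ Hh (pos_INR k`!); rewrite /=; lra.
  have Hle : expn 2 (t - k) * expn 2 k <= k`!.
    by rewrite -expnD subnK // trunc_logP // fact_gt0.
  have E : ((1/2) ^ k * 2 ^ k = 1)%R.
    by rewrite -Rpow_mult_distr (_ : (1/2 * 2 = 1)%R) ?pow1 //; field.
  have := Rmult_le_compat_r _ _ _ Hh (INR_leq Hle).
  rewrite mult_INR !INR_expn (_ : INR 2 = 2)%R // Rmult_assoc [(2 ^ k * _)%R]Rmult_comm E; lra.
have HA' : (INR k`! + 1 <= INR #|A| + INR (expn 2 (t - k)))%R.
  by rewrite -S_INR -plus_INR; apply: INR_leq.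
(* The goal elaborates [#|A|] through a different coercion path than [HA']; restating it lets
   [lra] see a single atom. *)
suff : ((1 - (1/2) ^ k) * INR k`! <= INR #|A|)%R by [].
by rewrite Rmult_minus_distr_r Rmult_1_l; lra.
Qed.

Lemma KC_ge_routing_function d : optimal d ->
  exists c : nat, forall k (sg : 'S_k) n F (u : 'I_n) b, n %/ 3 = k ->
  routing_scheme (Gk_pad sg n) F -> stretch_lt2 (Gk_pad sg n) F -> u < k ->
  KC_ge d (enc_perm sg) b -> KC_ge d (enc_local F u) (b - INR c)%R.
Proof.
move=> Hd; have [c Hc] := KC_ge_preimage Hd computes_decode_table.
exists c => k sg n F u b Hk HF Hs Hu Hb.
by apply: Hc; rewrite (Gk_pad_decode Hk HF Hs Hu).
Qed.

(** * Numerical bounds and the theorem *)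

Section Bounds.
Local Open Scope R_scope.

Lemma Gk_bound (K c0 cf : R) : 1 <= K -> 0 <= cf ->
  3 * K / 3 * log2 (3 * K) - (Rabs c0 + cf + 2) / 3 * (3 * K) <= K * log2 K - c0 * K - cf.
Proof.
move=> HK Hcf.
have H3 : log2 3 < INR 2 by apply: log2_lt_pow2; rewrite /=; lra.
rewrite /= in H3.
have : K * log2 3 <= K * 2 by apply: Rmult_le_compat_l; lra.
have : c0 * K <= Rabs c0 * K by apply: Rmult_le_compat_r; [lra | apply: Rle_abs].
have : cf <= cf * K by rewrite -{1}(Rmult_1_r cf); apply: Rmult_le_compat_l.
by rewrite log2M; lra.
Qed.

Lemma padded_bound n k (c : R) : (0 < k)%nat -> n %/ 3 = k -> 0 <= c ->
  INR n / 3 * log2 (INR n) - (c + 4) * INR n <= INR k * log2 (INR k) - 4 * INR k - c.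
Proof.
move=> Hk0 Hk Hc.
have HK : 1 <= INR k by apply: (INR_leq Hk0).
have HN : 3 * INR k <= INR n <= 3 * INR k + 2.
  have E3 : 3 = INR 3 by rewrite /=; lra.
  have E2 : 2 = INR 2 by rewrite /=; lra.
  by rewrite E3 E2 -mult_INR -plus_INR; split; apply: INR_leq; lia.
have HL0 : 0 <= log2 (INR k) by apply: log2_ge0.
have HLN0 : 0 <= log2 (INR n) by apply: log2_ge0; lra.
have HLN : log2 (INR n) <= log2 (INR k) + 3.
  have H5 : log2 5 < INR 3 by apply: log2_lt_pow2; rewrite /=; lra.
  have : log2 (INR n) <= log2 (5 * INR k) by apply: log2_le; lra.
  by rewrite log2M /= in H5 *; lra.
have HKL := log2_INR_le k.
have : INR n / 3 * log2 (INR n) <= (INR k + 1) * (log2 (INR k) + 3).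
  by apply: Rmult_le_compat; lra.
have : (c + 4) * (3 * INR k) <= (c + 4) * INR n by apply: Rmult_le_compat_l; lra.
by nra.
Qed.

Lemma total_bound (N K Lg S c : R) : 0 <= N -> 0 <= Lg <= N -> (N - 2) / 3 <= K <= N / 3 ->
  1 <= c -> 0 <= S -> (0 <= N / 3 * Lg - c * N -> K * (N / 3 * Lg - c * N) <= S) ->
  N ^ 2 / 9 * Lg - c * N ^ 2 <= S.
Proof.
move=> HN HL HK Hc HS Hb.
have HNL : N * Lg <= N * N by apply: Rmult_le_compat_l; lra.
have HcN : N * N <= c * (N * N).
  by rewrite -{1}(Rmult_1_l (N * N)); apply: Rmult_le_compat_r; nra.
case: (Rle_lt_dec 0 (N / 3 * Lg - c * N)) => Hb0.
  have := Rmult_le_compat_r _ _ _ Hb0 (proj1 HK).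
  by have := Hb Hb0; nra.
have : N * (N / 3 * Lg) <= N * (c * N) by apply: Rmult_le_compat_l; lra.
by nra.
Qed.

Lemma sum_INR_ge n (f : 'I_n -> nat) k (b : R) : (k <= n)%nat -> 0 <= b ->
  (forall u : 'I_n, (u < k)%nat -> b <= INR (f u)) -> INR k * b <= INR (\sum_(u < n) f u).
Proof.
elim: n f k => [|n IH] f k Hk Hb Hf.
  by rewrite (_ : k = 0%nat); [rewrite big_ord0 /=; lra | lia].
rewrite big_ord_recr /= plus_INR.
have IHk k' : (k' <= n)%nat -> (forall u : 'I_n.+1, (u < k')%nat -> b <= INR (f u)) ->
    INR k' * b <= INR (\sum_(i < n) f (widen_ord (leqnSn n) i)).
  by move=> Hk' Hf'; apply: IH => // u Hu; apply: Hf'.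
case: (leqP k n) => Hkn.
  by rewrite -[INR k * b]Rplus_0_r; apply: Rplus_le_compat; [apply: IHk | apply: pos_INR].
have -> : k = n.+1 by lia.
rewrite S_INR Rmult_plus_distr_r Rmult_1_l; apply: Rplus_le_compat.
  by apply: IHk => // u Hu; apply: Hf; lia.
by apply: Hf => /=; lia.
Qed.

End Bounds.

Lemma Gk_good_of_KC d : optimal d -> forall c0 : R, exists c : R, forall k (sg : 'S_k),
  KC_ge d (enc_perm sg) (INR k * log2 (INR k) - c0 * INR k)%R -> Gk_good d c sg.
Proof.
move=> Hd c0; have [cf Hcf] := KC_ge_routing_function Hd.
exists ((Rabs c0 + INR cf + 2) / 3)%R => k sg Hsg F HF Hs u Hu s Hdesc.
rewrite -Gk_pad3 in HF Hs.
apply: Rle_trans (Hcf _ _ _ _ _ _ (mulKn k (isT : 0 < 3)) HF Hs Hu Hsg _ Hdesc).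
rewrite mult_INR (_ : INR 3 = 3)%R; last by rewrite /=; lra.
have Hk : (1 <= k)%nat by apply: leq_ltn_trans Hu.
by apply: Gk_bound; [apply: (INR_leq Hk) | apply: pos_INR].
Qed.

Lemma many_good_Gk d : optimal d -> exists c : R, forall k, exists A : {set 'S_k},
  ((1 - (1/2) ^ k) * INR (k`!) <= INR #|A|)%R /\ forall sg, sg \in A -> Gk_good d c sg.
Proof.
move=> Hd; have [c Hc] := Gk_good_of_KC Hd 4%R.
exists c => k; have [A [HA HAs]] := perm_incompressible d k.
by exists A; split => // sg /HAs /Hc.
Qed.

Lemma exists_incompressible_perm d k :
  exists sg : 'S_k, KC_ge d (enc_perm sg) (INR k * log2 (INR k) - 4 * INR k)%R.
Proof.
have [A [HA HAs]] := perm_incompressible d k.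
case: (posnP k) => Hk.
  by exists 1%g => s _; rewrite Hk /= Rmult_0_l; have := pos_INR (size s); lra.
have /card_gt0P [sg /HAs] : 0 < #|A|; last by exists sg.
apply/ltP/INR_lt/(Rlt_le_trans _ _ _ _ HA)/Rmult_lt_0_compat.
  by have [_] := @pow_lt_1_compat (1/2) k ltac:(lra) (ltP Hk); rewrite /=; lra.
exact/lt_0_INR/ltP/fact_gt0.
Qed.

Lemma routing_lower_bound d : optimal d -> exists c : R, forall n : nat, exists e : rel 'I_n,
  simple_graph e /\ connected e /\
  exists S : {set 'I_n}, n %/ 3 <= #|S| /\
  forall F, routing_scheme e F -> stretch_lt2 e F ->
    (forall u, u \in S ->
       KC_ge d (enc_local F u) (INR n / 3 * log2 (INR n) - c * INR n)%R) /\
    (forall desc : 'I_n -> seq bool,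
       (forall u, describes d (desc u) (enc_local F u)) ->
       (INR n ^ 2 / 9 * log2 (INR n) - c * INR n ^ 2
          <= INR (\sum_(u < n) size (desc u)))%R).
Proof.
move=> Hd; have [cf Hcf] := KC_ge_routing_function Hd.
exists (INR cf + 4)%R => n; pose k := n %/ 3.
have [sg Hsg] := exists_incompressible_perm d k.
exists (Gk_pad sg n); split; first exact: Gk_pad_simple.
split; first exact: (@Gk_pad_connected k).
have Hkn : k <= n by rewrite /k; lia.
exists [set widen_ord Hkn i | i : 'I_k]; split.
  by rewrite card_imset ?card_ord // => i j [] /ord_inj.
move=> F HF Hs.
have Hnode (u : 'I_n) : u < k ->
    KC_ge d (enc_local F u) (INR n / 3 * log2 (INR n) - (INR cf + 4) * INR n)%R.
  move=> Hu s Hdesc; apply: Rle_trans (Hcf _ _ _ _ _ _ erefl HF Hs Hu Hsg _ Hdesc).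
  by apply: padded_bound => //; [apply: leq_ltn_trans Hu | apply: pos_INR].
split=> [u /imsetP [i _ ->]|desc Hdesc]; first by apply: Hnode; rewrite /=.
have HN : (INR n - 2 <= 3 * INR k <= INR n)%R.
  have /INR_leq H1 : n <= 3 * k + 2 by rewrite /k; lia.
  have /INR_leq H2 : 3 * k <= n by rewrite /k; lia.
  by rewrite plus_INR mult_INR /= in H1 H2; lra.
apply: (total_bound (K := INR k)).
- exact: pos_INR.
- by split; [apply: log2_INR_ge0 | apply: log2_INR_le].
- by lra.
- by have := pos_INR cf; lra.
- exact: pos_INR.
- move=> Hb; apply: sum_INR_ge => // u Hu.
  exact: Hnode u Hu (desc u) (Hdesc u).
Qed.

Unset Implicit Arguments.
Theorem theorem11 (d : prf) (Hd : optimal d) :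
  (* general n: labeled graphs on n nodes, bound at n/3 nodes and in total *)
  (exists c : R, forall n : nat, exists e : rel 'I_n,
     simple_graph e /\ connected e /\
     exists S : {set 'I_n}, n %/ 3 <= #|S| /\
     forall F, routing_scheme e F -> stretch_lt2 e F ->
       (forall u, u \in S ->
          KC_ge d (enc_local F u) (INR n / 3 * log2 (INR n) - c * INR n)%R) /\
       (forall desc : 'I_n -> seq bool,
          (forall u, describes d (desc u) (enc_local F u)) ->
          (INR n ^ 2 / 9 * log2 (INR n) - c * INR n ^ 2
             <= INR (\sum_(u < n) size (desc u)))%R)) /\
  (* n = 3k: G_k works whenever C(pi) >= k log k - O(k) *)
  (forall c0 : R, exists c : R, forall (k : nat) (sigma : 'S_k),
     KC_ge d (enc_perm sigma) (INR k * log2 (INR k) - c0 * INR k)%R ->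
     Gk_good d c sigma) /\
  (* n = 3k: at least (1 - 2^-k) k! such labeled graphs G_k *)
  (exists c : R, forall k : nat, exists A : {set 'S_k},
     ((1 - (1/2) ^ k) * INR (k`!) <= INR #|A|)%R /\
     forall sigma, sigma \in A -> Gk_good d c sigma).
Proof.
split; first exact: routing_lower_bound.
split; first exact: Gk_good_of_KC.
exact: many_good_Gk.
Qed.
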